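(* Let $G$ be a finite group acting linearly and isometrically on $\mathbb{R}^n$. Let $X=t_0+\epsilon$ where $\mathbb{E}(\epsilon)=0$ and $\epsilon$ is sub-Gaussian in the sense that there exist $c>0$, $s>0$ with $$\mathbb{E}\big(\exp\langle\epsilon,m\rangle\big)\le c\exp\Big(\frac{s^2\|m\|^2}{2}\Big)\quad\text{for all } m\in\mathbb{R}^n.$$ If $m\in\mathbb{R}^n$ satisfies $\tilde\rho:=d_Q([m],[t_0])\ge s\sqrt{2\log(c|G|)}$, then $$\tilde\rho^2-\tilde\rho\, s\sqrt{8\log(c|G|)}\le F(m)-\mathbb{E}(\|\epsilon\|^2).$$
   Context: The action is linear and isometric: each $x\mapsto g\cdot x$ is linear with $\|g\cdot x\|=\|x\|$ (Euclidean norm, inner product $\langle\cdot,\cdot\rangle$). $|G|$ is the cardinality of $G$, $d_Q([a],[b])=\min_{g\in G}\|g\cdot a-b\|$ and $F(m)=\mathbb{E}\big(\min_{g\in G}\|g\cdot X-m\|^2\big)$. *)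

From HB Require Import structures.
From mathcomp Require Import all_boot all_order all_algebra all_fingroup.
From mathcomp Require Import all_classical all_reals all_analysis.
From mathcomp Require Import probability.
Set Implicit Arguments. Unset Strict Implicit. Unset Printing Implicit Defensive.
Import Order.TTheory GRing.Theory Num.Theory.
Local Open Scope ring_scope.

Definition dotv {R : realType} {n : nat} (x y : 'rV[R]_n) : R :=
  \sum_(i < n) x ord0 i * y ord0 i.
Definition normv {R : realType} {n : nat} (x : 'rV[R]_n) : R :=
  Num.sqrt (dotv x x).

Definition lin_isom_action {R : realType} {n : nat} {gT : finGroupType}
  (act : gT -> 'rV[R]_n -> 'rV[R]_n) : Prop :=
  [/\ forall x, act 1%g x = x,
      forall g h x, act (g * h)%g x = act g (act h x),
      forall g (a : R) x y, act g (a *: x + y) = a *: act g x + act g y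
    & forall g x, normv (act g x) = normv x].

(* min over g in G of f g; the fold starts at f 1, which is one of the values,
   so this is exactly min_{g in G} f g. *)
Definition gmin {R : realType} {gT : finGroupType} (f : gT -> R) : R :=
  \big[Num.min/f 1%g]_(g : gT) f g.

Definition dQ {R : realType} {n : nat} {gT : finGroupType}
  (act : gT -> 'rV[R]_n -> 'rV[R]_n) (a b : 'rV[R]_n) : R :=
  gmin (fun g => normv (act g a - b)).

From HB Require Import structures.
From mathcomp Require Import all_boot all_order all_algebra all_fingroup.
From mathcomp Require Import all_classical all_reals all_analysis.
From mathcomp Require Import probability measurable_realfun.
From mathcomp Require Import ring lra.

(* For each g, ||g.X - m||^2 = ||eps||^2 + a_g + 2 <v_g, eps> with
   v_g = t0 - g^-1.m and a_g = ||v_g||^2 >= rho^2.  Bounding the minimum over G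
   from below by a soft minimum at temperature lam, linearized through
   1 + x <= e^x, and bounding E exp <eps, -2 lam v_g> by sub-Gaussianity gives
     F(m) - E ||eps||^2 >= rho^2 (1 - 2 s^2 lam) - log(c|G|) / lam
   for all 0 < lam <= 1 / (2 s^2); lam = sqrt(log(c|G|)) / (sqrt 2 s rho) yields
   the claim.  E ||eps||^2 is finite because x^2 <= 4 (e^x + e^-x). *)

Set Implicit Arguments.
Unset Strict Implicit.
Unset Printing Implicit Defensive.

Import Order.TTheory GRing.Theory Num.Theory.
Local Open Scope ring_scope.

Section euclidean.
Variables (R : realType) (n : nat).
Implicit Types (x y z : 'rV[R]_n) (a : R).

Lemma dotvC x y : dotv x y = dotv y x.
Proof. by apply: eq_bigr => i _; rewrite mulrC. Qed.

Lemma dotvDl x y z : dotv (x + y) z = dotv x z + dotv y z.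
Proof. by rewrite /dotv -big_split; apply: eq_bigr => i _; rewrite !mxE mulrDl. Qed.

Lemma dotvZl a x y : dotv (a *: x) y = a * dotv x y.
Proof. by rewrite /dotv mulr_sumr; apply: eq_bigr => i _; rewrite !mxE mulrA. Qed.

Lemma dotvDr x y z : dotv x (y + z) = dotv x y + dotv x z.
Proof. by rewrite dotvC dotvDl !(dotvC x). Qed.

Lemma dotvZr a x y : dotv x (a *: y) = a * dotv x y.
Proof. by rewrite dotvC dotvZl dotvC. Qed.

Lemma dotv0r x : dotv x 0 = 0.
Proof. by rewrite /dotv big1 // => i _; rewrite mxE mulr0. Qed.

Lemma dotv_row (e : 'I_n -> R) y : dotv (\row_i e i) y = \sum_i e i * y ord0 i.
Proof. by apply: eq_bigr => i _; rewrite mxE. Qed.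

Lemma dotv_ge0 x : 0 <= dotv x x.
Proof. by apply: sumr_ge0 => i _; rewrite -expr2 sqr_ge0. Qed.

Lemma normv_ge0 x : 0 <= normv x.
Proof. exact: sqrtr_ge0. Qed.

Lemma sqr_normv x : normv x ^+ 2 = dotv x x.
Proof. by rewrite sqr_sqrtr // dotv_ge0. Qed.

Lemma normv0 : normv (0 : 'rV[R]_n) = 0.
Proof. by rewrite /normv dotv0r sqrtr0. Qed.

Lemma normvN x : normv (- x) = normv x.
Proof. by rewrite /normv -scaleN1r dotvZl dotvZr mulrA mulrNN mulr1 mul1r. Qed.

Lemma sqr_normvZ a x : normv (a *: x) ^+ 2 = a ^+ 2 * normv x ^+ 2.
Proof. by rewrite !sqr_normv dotvZl dotvZr mulrA expr2. Qed.

Lemma sqr_normvD x y :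
  normv (x + y) ^+ 2 = normv x ^+ 2 + 2 * dotv x y + normv y ^+ 2.
Proof. rewrite !sqr_normv dotvDl !dotvDr (dotvC y x); lra. Qed.

End euclidean.

Section isometric_action.
Variables (R : realType) (n : nat) (gT : finGroupType).
Variable act : gT -> 'rV[R]_n -> 'rV[R]_n.
Hypothesis act_lin_isom : lin_isom_action act.

Lemma actB g x y : act g (x - y) = act g x - act g y.
Proof.
case: act_lin_isom => _ _ act_lin _.
by rewrite addrC -scaleN1r act_lin scaleN1r addrC.
Qed.

Lemma act_actV g x : act g (act g^-1%g x) = x.
Proof. by case: act_lin_isom => act1 actM _ _; rewrite -actM mulgV act1. Qed.

Lemma normv_actBl g x y : normv (act g x - y) = normv (x - act g^-1%g y).
Proof.
case: act_lin_isom => _ _ _ act_isom.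
by rewrite -{1}(act_actV g y) -actB act_isom.
Qed.

End isometric_action.

Section gmin.
Variables (R : realType) (gT : finGroupType).
Implicit Type f : gT -> R.

Lemma gmin_le f g : gmin f <= f g.
Proof. by rewrite /gmin (bigD1 g) //= ge_min lexx. Qed.

Lemma gmin_attained f : exists g, gmin f = f g.
Proof.
rewrite /gmin; apply: (big_ind (fun x => exists g, x = f g)) => [|x y [g ->] [h ->]|g _].
- by exists 1%g.
- by case: (leP (f g) (f h)) => _; [exists g | exists h].
- by exists g.
Qed.

Lemma gmin_ge0 f : (forall g, 0 <= f g) -> 0 <= gmin f.
Proof. by have [g ->] := gmin_attained f. Qed.

(* The soft minimum [- ln (\sum_g exp (- lam f g)) / lam], with [- ln] replaced
   by its tangent at [exp (- t)], bounds [gmin f] from below. *)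
Lemma softmin_le_gmin f (lam t : R) : 0 < lam ->
  (1 + t) / lam - \sum_g expR (t - lam * f g) / lam <= gmin f.
Proof.
move=> lam_gt0; have [g ->] := gmin_attained f.
have term_le : expR (t - lam * f g) / lam <= \sum_h expR (t - lam * f h) / lam.
  by rewrite (bigD1 g) //= lerDl sumr_ge0 // => h _; rewrite divr_ge0 ?expR_ge0 ?ltW.
have lin_le : (1 + (t - lam * f g)) / lam <= expR (t - lam * f g) / lam.
  by rewrite ler_pM2r ?invr_gt0 // expR_ge1Dx.
have -> : (1 + t) / lam = (1 + (t - lam * f g)) / lam + f g.
  by field; rewrite gt_eqF.
lra.
Qed.

End gmin.

Lemma measurable_gmin (R : realType) (gT : finGroupType) d (T : measurableType d)
  (f : gT -> T -> R) : (forall g, measurable_fun setT (f g)) ->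
  measurable_fun setT (fun w => gmin (fun g => f g w)).
Proof.
move=> mf; rewrite /gmin.
elim: (index_enum gT) => [|g r IH]; first by under eq_fun do rewrite big_nil; exact: mf.
by under eq_fun do rewrite big_cons; exact: measurable_minr.
Qed.

Section real_inequalities.
Variable R : realType.
Implicit Types x y s L rho : R.

Lemma sqr_le_expR x : x ^+ 2 <= 4 * (expR x + expR (- x)).
Proof.
have sqr_le_4expR y : 0 <= y -> y ^+ 2 <= 4 * expR y.
  move=> y_ge0; have half_ge0 : 0 <= y / 2 by lra.
  have := expR_ge1Dx (y / 2).
  have -> : expR y = expR (y / 2) ^+ 2 by rewrite -expRM_natl; congr expR; lra.
  nra.
have := expR_ge0 x; have := expR_ge0 (- x).
case: (lerP 0 x) => [x_ge0|x_lt0]; first by have := sqr_le_4expR x x_ge0; lra.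
by rewrite -sqrrN; have := sqr_le_4expR (- x) ltac:(lra); lra.
Qed.

Section lambda_tradeoff.
Variables (s L rho y : R).
Hypothesis s_gt0 : 0 < s.
Hypothesis bound_lambda : forall lam, 0 < lam -> 2 * s ^+ 2 * lam <= 1 ->
  rho ^+ 2 * (1 - 2 * s ^+ 2 * lam) - L / lam <= y.

Lemma lambda_tradeoff_pos : 0 < L -> s * Num.sqrt (2 * L) <= rho ->
  rho ^+ 2 - rho * s * Num.sqrt (8 * L) <= y.
Proof.
move=> L_gt0 rho_ge.
set r := Num.sqrt L; set r2 := Num.sqrt (2 : R).
have r_gt0 : 0 < r by rewrite sqrtr_gt0.
have r2_gt0 : 0 < r2 by rewrite sqrtr_gt0.
have r2_sqr : r2 ^+ 2 = 2 by rewrite sqr_sqrtr.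
have r_sqr : r ^+ 2 = L by rewrite sqr_sqrtr // ltW.
have sqrt2L : Num.sqrt (2 * L) = r2 * r by rewrite sqrtrM.
have sqrt8L : Num.sqrt (8 * L) = 2 * r2 * r.
  rewrite sqrtrM // (_ : 8 = 2 ^+ 2 * 2 :> R); last by rewrite expr2; lra.
  by rewrite sqrtrM ?sqr_ge0 // sqrtr_sqr ger0_norm.
rewrite sqrt2L in rho_ge; rewrite sqrt8L.
have rho_gt0 : 0 < rho by apply: lt_le_trans rho_ge; rewrite !mulr_gt0.
pose lam := r / (r2 * s * rho).
have lam_gt0 : 0 < lam by rewrite divr_gt0 // !mulr_gt0.
have lam_le : 2 * s ^+ 2 * lam = s * (r2 * r) / rho.
  by rewrite /lam -[X in X * s ^+ 2]r2_sqr; field; rewrite !gt_eqF.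
have := bound_lambda lam_gt0.
rewrite lam_le ler_pdivrMr // mul1r => /(_ rho_ge).
suff -> : rho ^+ 2 * (1 - s * (r2 * r) / rho) - L / lam
        = rho ^+ 2 - rho * s * (2 * r2 * r) by [].
rewrite /lam -r_sqr.
by field; rewrite !gt_eqF.
Qed.

Lemma lambda_tradeoff_zero : L = 0 -> rho ^+ 2 <= y.
Proof.
move=> L0; have two_s2_gt0 : 0 < 2 * s ^+ 2 by rewrite mulr_gt0 ?exprn_gt0.
have y_ge0 : 0 <= y.
  have := @bound_lambda (2 * s ^+ 2)^-1; rewrite invr_gt0 mulfV ?gt_eqF //.
  by rewrite L0 mul0r subrr mulr0 subr0; apply.
rewrite leNgt; apply/negP => y_lt.
have rho2_gt0 : 0 < rho ^+ 2 by lra.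
pose lam := (rho ^+ 2 - y) / (2 * s ^+ 2 * (2 * rho ^+ 2)).
have lam_gt0 : 0 < lam by rewrite divr_gt0 ?subr_gt0 // mulr_gt0 // mulr_gt0.
have lam_eq : 2 * s ^+ 2 * lam = (rho ^+ 2 - y) / (2 * rho ^+ 2).
  by rewrite /lam; field; rewrite -sqrf_eq0 !gt_eqF.
have := bound_lambda lam_gt0; rewrite lam_eq L0 mul0r subr0.
have two_rho2_gt0 : 0 < 2 * rho ^+ 2 by lra.
rewrite ler_pdivrMr // mul1r => /(_ ltac:(lra)).
have -> : rho ^+ 2 * (1 - (rho ^+ 2 - y) / (2 * rho ^+ 2)) = (rho ^+ 2 + y) / 2.
  by field; rewrite -sqrf_eq0 gt_eqF.
lra.
Qed.

Lemma lambda_tradeoff : 0 <= L -> s * Num.sqrt (2 * L) <= rho ->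
  rho ^+ 2 - rho * s * Num.sqrt (8 * L) <= y.
Proof.
move=> L_ge0; have [L_gt0|L_le0] := ltrP 0 L; first exact: lambda_tradeoff_pos.
have L0 : L = 0 by apply/eqP; rewrite eq_le L_le0 L_ge0.
by rewrite L0 !(mulr0, sqrtr0) subr0 => _; exact: lambda_tradeoff_zero.
Qed.

End lambda_tradeoff.
End real_inequalities.

Section nonneg_expectation.
Local Open Scope ereal_scope.
Variables (d : measure_display) (T : measurableType d) (R : realType).
Variable P : probability T R.
Implicit Types X Y Z : T -> R.

Lemma ge0_expectationD X Y :
  measurable_fun setT X -> measurable_fun setT Y ->
  (forall w, 0 <= X w)%R -> (forall w, 0 <= Y w)%R ->
  'E_P[X \+ Y] = 'E_P[X] + 'E_P[Y].
Proof.
move=> mX mY X_ge0 Y_ge0; rewrite unlock.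
under eq_integral do rewrite EFinD.
by rewrite ge0_integralD //; do ?[exact/measurable_EFinP | move=> w _; rewrite lee_fin].
Qed.

Lemma ge0_expectationZl (k : R) X : (0 <= k)%R ->
  measurable_fun setT X -> (forall w, 0 <= X w)%R ->
  'E_P[fun w => (k * X w)%R] = k%:E * 'E_P[X].
Proof.
move=> k_ge0 mX X_ge0; rewrite unlock.
under eq_integral do rewrite EFinM.
rewrite ge0_integralZl_EFin //; first by move=> w _; rewrite lee_fin.
exact/measurable_EFinP.
Qed.

Lemma ge0_expectation_sum (I : finType) (X : I -> T -> R) :
  (forall i, measurable_fun setT (X i)) -> (forall i w, 0 <= X i w)%R ->
  'E_P[fun w => (\sum_i X i w)%R] = \sum_i 'E_P[X i].
Proof.
move=> mX X_ge0; rewrite unlock.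
under eq_integral do rewrite -sumEFin.
rewrite ge0_integral_sum //; first by move=> i; exact/measurable_EFinP.
by move=> i w _; rewrite lee_fin.
Qed.

Lemma ge0_expectation_leD X Y Z (b : R) :
  measurable_fun setT X -> measurable_fun setT Y -> measurable_fun setT Z ->
  (forall w, 0 <= X w)%R -> (forall w, 0 <= Y w)%R -> (forall w, 0 <= Z w)%R ->
  (forall w, X w + b <= Y w + Z w)%R ->
  'E_P[X] + b%:E <= 'E_P[Y] + 'E_P[Z].
Proof.
move=> mX mY mZ X_ge0 Y_ge0 Z_ge0 XYZ.
have mYZ := measurable_funD mY mZ.
have YZ_ge0 w : (0 <= (Y \+ Z) w)%R by rewrite addr_ge0.
(* Adding [|b|] on both sides keeps every integrand nonnegative. *)
have b_absb : (0 <= b + `|b|)%R by rewrite -lerBlDl sub0r -normrN ler_norm.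
have cst_ge0 (r : R) : (0 <= r)%R -> forall w : T, (0 <= cst r w)%R by [].
have : 'E_P[(X \+ cst (b + `|b|))%R] <= 'E_P[((Y \+ Z) \+ cst `|b|)%R].
  apply: expectation_le; do ?exact: measurable_funD.
  - by move=> w; rewrite addr_ge0.
  - by move=> w; rewrite addr_ge0.
  - by apply: aeW => w /=; have := XYZ w; lra.
rewrite ge0_expectationD ?(cst_ge0 _ b_absb) // (expectation_cst P (b + `|b|)).
rewrite ge0_expectationD ?(cst_ge0 _ (normr_ge0 b)) // (expectation_cst P `|b|).
by rewrite ge0_expectationD // EFinD addeA leeD2rE.
Qed.

End nonneg_expectation.

Section subgaussian_vector.
Variables (R : realType) (n : nat) (d : measure_display) (T : measurableType d).
Variables (P : probability T R) (eps : 'I_n -> T -> R) (c s : R).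
Hypothesis eps_measurable : forall i, measurable_fun setT (eps i).
Hypothesis eps_subgaussian : forall v : 'rV[R]_n,
  ('E_P[fun w => expR (dotv (\row_i eps i w) v)]
    <= (c * expR (s ^+ 2 * normv v ^+ 2 / 2))%:E)%E.

Lemma measurable_dotv_row v :
  measurable_fun setT (fun w => dotv (\row_i eps i w) v).
Proof.
under eq_fun do rewrite dotv_row.
by apply: measurable_sum => i; apply: measurable_funM.
Qed.

Lemma measurable_expR_dotv_row v :
  measurable_fun setT (fun w => expR (dotv (\row_i eps i w) v)).
Proof. exact: measurableT_comp (measurable_dotv_row v). Qed.

Lemma measurable_sqr_normvD v :
  measurable_fun setT (fun w => normv (v + \row_i eps i w) ^+ 2).
Proof.
under eq_fun do rewrite sqr_normv.
apply: measurable_sum => i.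
have mvi : measurable_fun setT (fun w => (v + \row_i eps i w) ord0 i).
  by under eq_fun do rewrite !mxE; exact: measurable_funD.
exact: (measurable_funM mvi mvi).
Qed.

Lemma subgaussian_const_ge1 : 1 <= c.
Proof.
have := eps_subgaussian 0; under eq_fun do rewrite dotv0r expR0.
by rewrite expectation_cst normv0 expr0n /= mulr0 mul0r expR0 mulr1 lee_fin.
Qed.

Lemma expectation_sum_expR_dotv_le (I : finType) (k : I -> R) (u : I -> 'rV[R]_n) :
  (forall i, 0 <= k i) ->
  ('E_P[fun w => (\sum_i k i * expR (dotv (\row_j eps j w) (u i)))%R]
    <= (\sum_i k i * (c * expR (s ^+ 2 * normv (u i) ^+ 2 / 2)))%:E)%E.
Proof.
move=> k_ge0.
rewrite ge0_expectation_sum; first last.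
- by move=> i w; rewrite mulr_ge0 ?expR_ge0.
- by move=> i; apply: measurable_funM => //; exact: measurable_expR_dotv_row.
rewrite -sumEFin; apply: lee_sum => i _.
rewrite ge0_expectationZl ?expR_ge0 //; last exact: measurable_expR_dotv_row.
by rewrite EFinM lee_wpmul2l ?lee_fin.
Qed.

Lemma expectation_sqr_normv_fin_num :
  ('E_P[fun w => (normv (\row_i eps i w) ^+ 2)%R] \is a fin_num)%E.
Proof.
set N := fun w => _.
have mN : measurable_fun setT N.
  by have := measurable_sqr_normvD 0; under eq_fun do rewrite add0r.
pose K (sgn : R) w := \sum_(i < n) 4 * expR (dotv (\row_j eps j w) (sgn *: delta_mx ord0 i)).
have mK sgn : measurable_fun setT (K sgn).
  by apply: measurable_sum => i; apply: measurable_funM => //; exact: measurable_expR_dotv_row.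
have K_ge0 sgn w : 0 <= K sgn w by apply: sumr_ge0 => i _; rewrite mulr_ge0 ?expR_ge0.
have N_le w : N w <= K 1 w + K (-1) w.
  rewrite /N /K sqr_normv dotv_row -big_split /=; apply: ler_sum => i _.
  rewrite !dotvZr !dotv_row (bigD1 i) //= big1 => [|j /negbTE ji]; last first.
    by rewrite !mxE ji mulr0.
  by rewrite !mxE !eqxx addr0 mulr1 mul1r mulN1r -expr2 -mulrDr sqr_le_expR.
have K_fin sgn : ('E_P[K sgn] < +oo)%E.
  apply: le_lt_trans (ltry _).
  exact: (expectation_sum_expR_dotv_le (k := fun=> 4)).
have : ('E_P[N] <= 'E_P[(K 1 \+ K (-1))%R])%E.
  apply: expectation_le => //; first exact: measurable_funD.
  - by move=> w; rewrite sqr_ge0.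
  - by move=> w; rewrite addr_ge0.
  - exact: aeW.
rewrite ge0_expectationD // => N_leK.
rewrite ge0_fin_numE ?expectation_ge0 //; last by move=> w; rewrite sqr_ge0.
by apply: le_lt_trans N_leK _; rewrite lte_add_pinfty.
Qed.

End subgaussian_vector.

Lemma sqr_normv_act_softmin_le (R : realType) (n : nat) (gT : finGroupType)
    (act : gT -> 'rV[R]_n -> 'rV[R]_n) (t0 m e : 'rV[R]_n) (lam t : R) :
  lin_isom_action act -> 0 < lam ->
  normv e ^+ 2 + (1 + t) / lam <=
  gmin (fun g => normv (act g (t0 + e) - m) ^+ 2) +
  \sum_g expR (t - lam * normv (t0 - act g^-1%g m) ^+ 2) / lam
         * expR (dotv e ((-2 * lam) *: (t0 - act g^-1%g m))).
Proof.
move=> act_lin_isom lam_gt0.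
have := softmin_le_gmin (fun g => normv (act g (t0 + e) - m) ^+ 2)
  (t + lam * normv e ^+ 2) lam_gt0.
rewrite (eq_bigr (fun g => expR (t - lam * normv (t0 - act g^-1%g m) ^+ 2) / lam
         * expR (dotv e ((-2 * lam) *: (t0 - act g^-1%g m))))) => [|g _].
  have -> : (1 + (t + lam * normv e ^+ 2)) / lam = (1 + t) / lam + normv e ^+ 2.
    by field; rewrite gt_eqF.
  lra.
rewrite normv_actBl // (addrAC t0 e) [normv (_ + e) ^+ 2]sqr_normvD dotvZr [dotv e _]dotvC.
rewrite mulrAC -expRD.
by congr (expR _ / _); ring.
Qed.

Section quotient_risk.
Variables (R : realType) (n : nat) (gT : finGroupType).
Variable act : gT -> 'rV[R]_n -> 'rV[R]_n.
Variables (d : measure_display) (T : measurableType d) (P : probability T R).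
Variables (eps : 'I_n -> T -> R) (t0 m : 'rV[R]_n) (c s : R).
Hypothesis act_lin_isom : lin_isom_action act.
Hypothesis eps_measurable : forall i, measurable_fun setT (eps i).
Hypothesis c_gt0 : 0 < c.
Hypothesis eps_subgaussian : forall v : 'rV[R]_n,
  ('E_P[fun w => expR (dotv (\row_i eps i w) v)]
    <= (c * expR (s ^+ 2 * normv v ^+ 2 / 2))%:E)%E.

Let rho := dQ act m t0.
Let L := ln (c * #|gT|%:R).
Let v g := t0 - act g^-1%g m.

Lemma dQ_ge0 : 0 <= rho.
Proof. by apply: gmin_ge0 => g; exact: normv_ge0. Qed.

Lemma sqr_dQ_le g : rho ^+ 2 <= normv (v g) ^+ 2.
Proof.
rewrite ler_sqr ?nnegrE ?normv_ge0 ?dQ_ge0 //.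
by rewrite /v -normvN opprB -[g in act g]invgK; exact: gmin_le.
Qed.

(* The offset [lam rho^2 (1 - 2 s^2 lam) - L] makes the bound exactly [1/lam]. *)
Lemma expectation_softmin_weights_le (lam : R) :
  0 < lam -> 2 * s ^+ 2 * lam <= 1 ->
  ('E_P[fun w => (\sum_g expR (lam * rho ^+ 2 * (1 - 2 * s ^+ 2 * lam) - L - lam * normv (v g) ^+ 2) / lam
                          * expR (dotv (\row_i eps i w) ((-2 * lam) *: v g)))%R]
    <= (lam^-1)%:E)%E.
Proof.
move=> lam_gt0 lam_le; set q := 1 - 2 * s ^+ 2 * lam.
apply: le_trans (expectation_sum_expR_dotv_le eps_measurable eps_subgaussian _ _) _.
  by move=> g; rewrite divr_ge0 ?expR_ge0 ?ltW.
rewrite lee_fin.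
have term_le g : expR (lam * rho ^+ 2 * q - L - lam * normv (v g) ^+ 2) / lam
    * (c * expR (s ^+ 2 * normv ((-2 * lam) *: v g) ^+ 2 / 2))
    <= c * expR (- L) / lam.
  rewrite sqr_normvZ mulrAC mulrCA -expRD ler_pM2r ?invr_gt0 // ler_pM2l //.
  have lq_ge0 : 0 <= lam * q by rewrite mulr_ge0 ?(ltW lam_gt0) // /q subr_ge0.
  rewrite ler_expR; have := sqr_dQ_le g; move: lq_ge0; rewrite /q; nra.
apply: le_trans (ler_sum _ (fun g _ => term_le g)) _.
have cG_gt0 : 0 < c * #|gT|%:R.
  by rewrite mulr_gt0 // ltr0n; apply/card_gt0P; exists 1%g.
rewrite sumr_const -mulr_natr expRN lnK ?posrE //.
suff -> : c * (c * #|gT|%:R)^-1 / lam * #|gT|%:R = lam^-1 by [].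
by field; rewrite !gt_eqF //; move: cG_gt0; rewrite pmulr_rgt0.
Qed.

Lemma expectation_gmin_sqr_normv_ge (lam : R) :
  0 < lam -> 2 * s ^+ 2 * lam <= 1 ->
  ((rho ^+ 2 * (1 - 2 * s ^+ 2 * lam) - L / lam)%:E
   <= 'E_P[fun w => gmin (fun g => normv (act g (t0 + \row_i eps i w) - m) ^+ 2)%R]
      - 'E_P[fun w => (normv (\row_i eps i w) ^+ 2)%R])%E.
Proof.
move=> lam_gt0 lam_le.
set t := lam * rho ^+ 2 * (1 - 2 * s ^+ 2 * lam) - L.
set f := fun w => gmin _; set N := fun w => _.
set K := fun w => \sum_g expR (t - lam * normv (v g) ^+ 2) / lam
                    * expR (dotv (\row_i eps i w) ((-2 * lam) *: v g)).
have mN : measurable_fun setT N.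
  by have := measurable_sqr_normvD eps_measurable 0; under eq_fun do rewrite add0r.
have mf : measurable_fun setT f.
  apply: measurable_gmin => g.
  under eq_fun do rewrite normv_actBl // (addrAC t0).
  exact: measurable_sqr_normvD.
have mK : measurable_fun setT K.
  apply: measurable_sum => g; apply: measurable_funM => //.
  exact: measurable_expR_dotv_row.
have N_ge0 w : 0 <= N w by exact: sqr_ge0.
have f_ge0 w : 0 <= f w by apply: gmin_ge0 => g; exact: sqr_ge0.
have K_ge0 w : 0 <= K w.
  by apply: sumr_ge0 => g _; rewrite mulr_ge0 ?divr_ge0 ?expR_ge0 ?ltW.
have := ge0_expectation_leD P mN mf mK N_ge0 f_ge0 K_ge0
  (fun w => sqr_normv_act_softmin_le t0 m (\row_i eps i w) t act_lin_isom lam_gt0).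
move/le_trans/(_ (leeD2l _ (expectation_softmin_weights_le lam_gt0 lam_le))).
rewrite leeBrDl; last exact: expectation_sqr_normv_fin_num eps_measurable eps_subgaussian.
have -> : rho ^+ 2 * (1 - 2 * s ^+ 2 * lam) - L / lam = (1 + t) / lam - lam^-1.
  by rewrite /t; field; rewrite gt_eqF.
by rewrite EFinB addeA leeBlDr.
Qed.

End quotient_risk.

Theorem mainTheorem7 (R : realType) (n : nat) (gT : finGroupType)
  (act : gT -> 'rV[R]_n -> 'rV[R]_n)
  (d : measure_display) (T : measurableType d) (P : probability T R)
  (eps : 'I_n -> T -> R) (t0 m : 'rV[R]_n) (c s : R) :
  lin_isom_action act ->
  (forall i, measurable_fun setT (eps i)) ->
  (forall i, P.-integrable setT (EFin \o eps i)) ->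
  (forall i, ('E_P[eps i] = 0)%E) ->
  0 < c -> 0 < s ->
  (forall v : 'rV[R]_n,
     ('E_P[fun w => expR (dotv (\row_i eps i w) v)]
      <= (c * expR (s ^+ 2 * normv v ^+ 2 / 2))%:E)%E) ->
  let X := fun w => t0 + \row_i eps i w in
  let F := fun m' : 'rV[R]_n =>
             ('E_P[fun w => gmin (fun g => (normv (act g (X w) - m') ^+ 2)%R)])%E in
  let rho := dQ act m t0 in
  s * Num.sqrt (2 * ln (c * #|gT|%:R)) <= rho ->
  ((rho ^+ 2 - rho * s * Num.sqrt (8 * ln (c * #|gT|%:R)))%:E
   <= F m - 'E_P[fun w => (normv (\row_i eps i w) ^+ 2)%R])%E.
Proof.
move=> act_lin_isom eps_measurable _ _ c_gt0 s_gt0 eps_subgaussian X F rho rho_ge.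
have bound := expectation_gmin_sqr_normv_ge t0 m act_lin_isom eps_measurable c_gt0
  eps_subgaussian.
have c_ge1 := subgaussian_const_ge1 eps_subgaussian.
have G_ge1 : 1 <= #|gT|%:R :> R by rewrite ler1n; apply/card_gt0P; exists 1%g.
have L_ge0 : 0 <= ln (c * #|gT|%:R) by rewrite ln_ge0 // mulr_ege1.
rewrite /F /X /=; move: bound; set Y := (_ - _)%E => bound.
have two_s2_gt0 : 0 < 2 * s ^+ 2 by rewrite mulr_gt0 ?exprn_gt0.
case: Y bound => [y | | ] bound; last 2 first.
- by rewrite leey.
- have := @bound (2 * s ^+ 2)^-1.
  by rewrite invr_gt0 mulfV ?gt_eqF // leeNy_eq => /(_ two_s2_gt0 (lexx 1)).
rewrite lee_fin; apply: lambda_tradeoff s_gt0 _ L_ge0 rho_ge => lam lam_gt0 lam_le.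
by rewrite -lee_fin bound.
Qed.
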